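(* Let $(S,\Delta,\mathbb{P})$ be a probability space, $(U,d)$ a separable metric space, $\mathfrak{X}$ the set of $U$-valued random variables on $S$, $\mathcal{I}$ an ideal on $\mathbb{N}$ with $\mathbb{N}\notin\mathcal{I}$, $r\geq 0$, and $\{X_n\}_{n\in\mathbb{N}}$ a sequence in $\mathfrak{X}$. Then the set $\mathcal{I}^{\mathbb{P}}\text{-}LIM^rX_i$ is bounded in $(\mathfrak{X}^0,\rho)$ and its $\rho$-diameter is at most $\min\{1,2r\}$. Moreover, this bound cannot be reduced in general: for every $r$ with $0<2r<1$ there exist a probability space and a sequence of real-valued random variables (with $U=\mathbb{R}$ and the usual metric) such that, for the ideal $\mathcal{I}_{1/n}=\{A\subseteq\mathbb{N}:\sum_{n\in A}\frac1n<\infty\}$, the set $\mathcal{I}_{1/n}^{\mathbb{P}}\text{-}LIM^rX_i$ has $\rho$-diameter exactly $2r$.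
   Context: The Ky Fan metric is $\rho(X,Y)=\inf\{\varepsilon>0:\mathbb{P}(d(X,Y)>\varepsilon)\leq\varepsilon\}$; $\mathfrak{X}^0$ is the set of equivalence classes of $\mathfrak{X}$ under almost sure equality, on which $\rho$ is a metric. An ideal on $\mathbb{N}$ is a family $\mathcal{I}\subseteq\mathcal{P}(\mathbb{N})$ with $\varnothing\in\mathcal{I}$, closed under finite unions and under subsets. A sequence $\{X_n\}$ in $\mathfrak{X}$ is rough $\mathcal{I}$-convergent in probability to $X_*\in\mathfrak{X}$ with degree of roughness $r$ if $\{n\in\mathbb{N}:\mathbb{P}(d(X_n,X_* )>r+\varepsilon)>\delta\}\in\mathcal{I}$ for every $\varepsilon,\delta>0$; $\mathcal{I}^{\mathbb{P}}\text{-}LIM^rX_i$ denotes the set of all such $X_*$ (regarded as a subset of $\mathfrak{X}^0$). *)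

From HB Require Import structures.
From mathcomp Require Import all_boot all_order all_algebra.
From mathcomp Require Import all_classical all_reals all_analysis.
Set Implicit Arguments. Unset Strict Implicit. Unset Printing Implicit Defensive.
Import Order.TTheory GRing.Theory Num.Theory.
Local Open Scope classical_set_scope.
Local Open Scope ring_scope.

Section Defs.
Context {R : realType}.

Definition is_metric (U : Type) (dist : U -> U -> R) : Prop :=
  forall x y z : U,
    0 <= dist x y /\ (dist x y = 0 <-> x = y) /\ dist x y = dist y x /\
    dist x z <= dist x y + dist y z.

Definition d_open (U : Type) (dist : U -> U -> R) (O : set U) : Prop :=
  forall x, O x -> exists2 e : R, 0 < e & forall y, dist x y < e -> O y.

Definition separable (U : Type) (dist : U -> U -> R) : Prop :=
  exists D : set U, countable D /\
    forall x (e : R), 0 < e -> exists y, D y /\ dist x y < e.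

Definition U_rand_var d (S : measurableType d) (U : Type)
    (dist : U -> U -> R) (X : S -> U) : Prop :=
  forall O : set U, d_open dist O -> measurable (X @^-1` O).

Definition ky_fan d (S : measurableType d) (P : probability S R) (U : Type)
    (dist : U -> U -> R) (X Y : S -> U) : R :=
  inf [set e : R | 0 < e /\
         (P [set s | (e < dist (X s) (Y s))%R] <= e%:E)%E].

Definition is_ideal (I : set (set nat)) : Prop :=
  I set0 /\ (forall A B, I A -> I B -> I (A `|` B)) /\
  (forall A B, B `<=` A -> I A -> I B).

Definition rough_I_lim d (S : measurableType d) (P : probability S R)
    (U : Type) (dist : U -> U -> R) (I : set (set nat)) (r : R)
    (X : nat -> S -> U) : set (S -> U) :=
  [set Xs | U_rand_var dist Xs /\
     forall eps delta : R, 0 < eps -> 0 < delta ->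
       I [set n | (delta%:E < P [set s | (r + eps < dist (X n s) (Xs s))%R])%E]].

Definition ky_fan_diam d (S : measurableType d) (P : probability S R)
    (U : Type) (dist : U -> U -> R) (L : set (S -> U)) : R :=
  sup [set ky_fan P dist X Y | X in L & Y in L].

(* the ideal I_{1/n}; index n : nat stands for the natural number n+1 *)
Definition I_harm : set (set nat) :=
  [set A | (\sum_(0 <= n <oo | n \in A) ((n.+1%:R : R)^-1)%:E < +oo)%E].

End Defs.

Arguments U_rand_var {R d S U} dist X.
Arguments ky_fan {R d S} P {U} dist X Y.
Arguments rough_I_lim {R d S} P {U} dist I r X _.
Arguments ky_fan_diam {R d S} P {U} dist L.
Arguments is_metric {R U} dist.
Arguments separable {R U} dist.
Arguments d_open {R U} dist O.

From HB Require Import structures.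
From mathcomp Require Import all_boot all_order all_algebra.
From mathcomp Require Import all_classical all_reals all_analysis.
From mathcomp Require Import lra.
Import numFieldNormedType.Exports.
Import Order.TTheory GRing.Theory Num.Theory.
Local Open Scope classical_set_scope.
Local Open Scope ring_scope.

(* If Y and Z both lie in I-LIM^r, the two exceptional index sets belong to
   I, so their union is not all of N: some X_n is within r + eps of both Y
   and Z outside events of probability delta each.  By the triangle
   inequality P(d(Y, Z) > 2r + 2eps) <= 2 delta, whence rho(Y, Z) <= 2r; and
   rho <= 1 always.  The bound is attained by the zero sequence on a
   one-point space: the constants r and -r both lie in I-LIM^r, at Ky Fan
   distance 2r as soon as 2r < 1. *)

Section metric_space.
Context {R : realType} {U : Type} {dist : U -> U -> R}.

Lemma U_rand_var_cst {d} {S : measurableType d} (c : U) :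
  U_rand_var dist (fun _ : S => c).
Proof.
move=> O _; have [Oc|Oc] := pselect (O c).
- by rewrite (_ : _ @^-1` O = setT) //; apply/seteqP; split.
- by rewrite (_ : _ @^-1` O = set0) //; apply/seteqP; split.
Qed.

Hypothesis dist_metric : is_metric dist.

Lemma dist_sym (x y : U) : dist x y = dist y x.
Proof. by have [_ [_ []]] := dist_metric x y x. Qed.

Lemma dist_triangle (x y z : U) : dist x z <= dist x y + dist y z.
Proof. by have [_ [_ []]] := dist_metric x y z. Qed.

Lemma dist_quadrangle (x y a b : U) :
  dist x y <= dist x a + dist a b + dist b y.
Proof.
have := dist_triangle x a y; have := dist_triangle a b y; lra.
Qed.

Lemma d_open_ball (a : U) (e : R) : d_open dist [set y | dist a y < e].
Proof.
move=> x /= hx; exists (e - dist a x) => [|y hy /=]; first by rewrite subr_gt0.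
by have := dist_triangle a x y; lra.
Qed.

Hypothesis dist_separable : separable dist.

Lemma measurable_dist_gt {d} {S : measurableType d} (Y Z : S -> U) (c : R) :
  U_rand_var dist Y -> U_rand_var dist Z ->
  measurable [set s | c < dist (Y s) (Z s)].
Proof.
move: dist_separable => [D [cD denseD]] mY mZ.
pose G (a b : U) (e : R) : set S :=
  [set s | c + 2 * e < dist a b /\ dist a (Y s) < e /\ dist b (Z s) < e].
have mG a b e : measurable (G a b e).
  have [ab|ab] := boolP (c + 2 * e < dist a b).
  - rewrite (_ : G a b e = Y @^-1` [set y | dist a y < e] `&`
                           Z @^-1` [set y | dist b y < e]).
      by apply: measurableI; [apply: mY | apply: mZ]; exact: d_open_ball.
    rewrite /G; apply/seteqP; split => s /=; first by case=> _ [].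
    by case=> ? ?; split.
  - rewrite (_ : G a b e = set0) //.
    by apply/seteqP; split => s //= [ab' _]; rewrite ab' in ab.
(* Approximate Y s and Z s by points of the countable dense set D. *)
rewrite (_ : [set s | _] = \bigcup_(a : D) \bigcup_(b : D) \bigcup_(k : nat)
                             G (val a) (val b) k.+1%:R^-1).
  have cDT : countable [set: D] by rewrite (eq_countable (card_setT D)).
  apply: countable_bigcupT_measurable => // a.
  apply: countable_bigcupT_measurable => // b.
  exact: countable_bigcupT_measurable.
apply/seteqP; split => s /=.
- move=> cYZ.
  have [k] : exists k, 0 + k.+1%:R^-1 < (dist (Y s) (Z s) - c) / 4.
    by apply: ltr_add_invr; rewrite divr_gt0 // subr_gt0.
  rewrite add0r => hk; set e := k.+1%:R^-1 in hk *.
  have e0 : 0 < e by rewrite invr_gt0.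
  have [a [Da Ya]] := denseD (Y s) _ e0.
  have [b [Db Zb]] := denseD (Z s) _ e0.
  exists (exist _ a (mem_set Da)) => //; exists (exist _ b (mem_set Db)) => //.
  exists k => //; rewrite /G /= -/e.
  have := dist_quadrangle (Y s) (Z s) a b.
  rewrite (dist_sym (Y s) a) in Ya *; rewrite (dist_sym (Z s) b) in Zb.
  by split; [lra | split].
- case=> -[a Da] _ [[b Db] _ [k _]]; move: k.+1%:R^-1 => e /= [ab [aY bZ]].
  have := dist_quadrangle a b (Y s) (Z s).
  by rewrite (dist_sym (Z s) b); lra.
Qed.

End metric_space.

Section harmonic_ideal.
Context {R : realType}.
Local Open Scope ereal_scope.

Lemma nneseries_setU_le (f : nat -> \bar R) (A B : set nat) :
  (forall n, 0 <= f n) ->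
  \sum_(n <oo | n \in A `|` B) f n <=
  \sum_(n <oo | n \in A) f n + \sum_(n <oo | n \in B) f n.
Proof.
move=> f0; rewrite eseries_mkcond.
have fA0 (C : set nat) n : 0 <= if n \in C then f n else 0 by case: ifP.
rewrite (eseries_mkcond (P := fun n => n \in A)).
rewrite (eseries_mkcond (P := fun n => n \in B)).
rewrite -nneseriesD => [|n _ _|n _ _]; [|exact: fA0..].
apply: lee_nneseries => [n _ _|n _]; first by rewrite in_setU; case: ifP.
rewrite in_setU.
case: (n \in A); case: (n \in B) => //=; rewrite ?adde0 ?add0e //.
by rewrite leeDl.
Qed.

Lemma is_ideal_I_harm : is_ideal (@I_harm R).
Proof.
have f0 n : 0 <= ((n.+1%:R : R)^-1)%:E by rewrite lee_fin invr_ge0.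
split; [|split].
- by rewrite /I_harm /= eseries0 // => n _; rewrite in_set0.
- move=> A B; rewrite /I_harm /= => hA hB.
  exact: le_lt_trans (nneseries_setU_le _ A B f0) (lte_add_pinfty hA hB).
- move=> A B BA hA; rewrite /I_harm /=; apply: le_lt_trans hA.
  by apply: subset_lee_nneseries => // n; rewrite !inE => /BA.
Qed.

Lemma not_I_harm_setT : ~ (@I_harm R) [set: nat].
Proof.
rewrite /I_harm /= => fin; apply: (@dvg_harmonic R).
apply: nnseries_is_cvg harmonic_ge0 _.
by rewrite (@eq_eseriesl _ xpredT (fun n => n \in [set: nat])) // => n;
  rewrite in_setT.
Qed.

End harmonic_ideal.

Section ky_fan.
Context {R : realType} {d} {S : measurableType d} {P : probability S R}
  {U : Type} {dist : U -> U -> R}.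

Lemma ky_fan_le (Y Z : S -> U) (e : R) : 0 < e ->
  (P [set s | (e < dist (Y s) (Z s))%R] <= e%:E)%E -> ky_fan P dist Y Z <= e.
Proof.
move=> e0 Pe; apply: ge_inf; last by split.
by exists 0 => x [/ltW].
Qed.

Lemma ky_fan_le1 (Y Z : S -> U) :
  measurable [set s | 1 < dist (Y s) (Z s)] -> ky_fan P dist Y Z <= 1.
Proof. by move=> m1; apply: ky_fan_le => //; exact: probability_le1. Qed.

Lemma ky_fan_ge (Y Z : S -> U) (c : R) : c <= 1 ->
  (forall s, c <= dist (Y s) (Z s)) ->
  measurable [set s | 1 < dist (Y s) (Z s)] -> c <= ky_fan P dist Y Z.
Proof.
move=> c1 cYZ m1; apply: lb_le_inf.
  by exists 1; split => //; exact: probability_le1.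
move=> e [e0 Pe]; rewrite leNgt; apply/negP => ec.
have YZe : [set s | e < dist (Y s) (Z s)] = setT.
  by apply/seteqP; split => s // _; exact: lt_le_trans ec (cYZ s).
by move: Pe; rewrite YZe probability_setT lee_fin; lra.
Qed.

Lemma ky_fan_le_diam (L : set (S -> U)) (M : R) (Y Z : S -> U) :
  (forall Y Z, L Y -> L Z -> ky_fan P dist Y Z <= M) ->
  L Y -> L Z -> ky_fan P dist Y Z <= ky_fan_diam P dist L.
Proof.
move=> LM LY LZ; apply: ub_le_sup; last by exists Y => //; exists Z.
by exists M => _ [Y' LY' [Z' LZ' <-]]; exact: LM.
Qed.

Lemma ky_fan_diam_le (L : set (S -> U)) (M : R) : 0 <= M ->
  (forall Y Z, L Y -> L Z -> ky_fan P dist Y Z <= M) ->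
  ky_fan_diam P dist L <= M.
Proof.
move=> M0 LM; rewrite /ky_fan_diam.
have [[x Lx]|L0] :=
  pselect (exists x, [set ky_fan P dist Y Z | Y in L & Z in L] x).
  by apply: ge_sup; [exists x | move=> _ [Y LY [Z LZ <-]]; exact: LM].
rewrite (_ : [set _ | _ in L & _ in L] = set0) ?sup0 //.
by apply/seteqP; split => x // Lx; apply: L0; exists x.
Qed.

Hypotheses (dist_metric : is_metric dist) (dist_separable : separable dist).

Lemma ky_fan_le_double (Y Z : S -> U) (r : R) : 0 <= r ->
  U_rand_var dist Y -> U_rand_var dist Z ->
  (forall eps delta : R, 0 < eps -> 0 < delta ->
     exists2 W, U_rand_var dist W &
       (P [set s | (r + eps < dist (W s) (Y s))%R] <= delta%:E)%E /\
       (P [set s | (r + eps < dist (W s) (Z s))%R] <= delta%:E)%E) ->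
  ky_fan P dist Y Z <= 2 * r.
Proof.
move=> r0 mY mZ near_both; apply/ler_addgt0Pr => e e0.
have e2 : 0 < e / 2 by rewrite divr_gt0.
have [W mW [WY WZ]] := near_both _ _ e2 e2.
apply: ky_fan_le; first lra.
have YZ_sub : [set s | 2 * r + e < dist (Y s) (Z s)] `<=`
    [set s | r + e / 2 < dist (W s) (Y s)] `|`
    [set s | r + e / 2 < dist (W s) (Z s)].
  move=> s /= YZs; have := dist_triangle dist_metric (Y s) (W s) (Z s).
  rewrite (dist_sym dist_metric (Y s) (W s)).
  by case: (ltrP (r + e / 2) (dist (W s) (Y s))) => ?; [left | right; lra].
have mWY : measurable [set s | r + e / 2 < dist (W s) (Y s)].
  exact: measurable_dist_gt.
have mWZ : measurable [set s | r + e / 2 < dist (W s) (Z s)].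
  exact: measurable_dist_gt.
have mYZ : measurable [set s | 2 * r + e < dist (Y s) (Z s)].
  exact: measurable_dist_gt.
have mWYZ := measurableU _ _ mWY mWZ.
apply: le_trans (le_measure _ (mem_set mYZ) (mem_set mWYZ) YZ_sub) _.
apply: le_trans (measureU2 _ mWY mWZ) _.
by apply: le_trans (leeD WY WZ) _; rewrite -EFinD lee_fin; lra.
Qed.

End ky_fan.

Lemma proper_ideal_exists_notU {I : set (set nat)} {A B : set nat} :
  is_ideal I -> ~ I setT -> I A -> I B -> exists n, ~ A n /\ ~ B n.
Proof.
move=> [_ [IU IS]] I_proper IA IB; apply: contrapT => noAB; apply: I_proper.
apply: IS (IU _ _ IA IB) => n _; apply: contrapT => nAB.
by apply: noAB; exists n; split => ?; apply: nAB; [left | right].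
Qed.

Section rough_limits.
Context {R : realType} {d} {S : measurableType d} {P : probability S R}
  {U : Type} {dist : U -> U -> R} {I : set (set nat)} {r : R}
  {X : nat -> S -> U}.

Lemma rough_I_lim_of_dist_le (W : S -> U) : I set0 -> U_rand_var dist W ->
  (forall n s, dist (X n s) (W s) <= r) -> rough_I_lim P dist I r X W.
Proof.
move=> I0 mW XW; split => // eps delta e0 d0.
rewrite (_ : [set n | _] = set0) //; apply/seteqP; split => n //=.
rewrite (_ : [set s | _] = set0) ?measure0 ?lte_fin; first lra.
by apply/seteqP; split => s //=; have := XW n s; lra.
Qed.

Hypotheses (dist_metric : is_metric dist) (dist_separable : separable dist).
Hypotheses (I_ideal : is_ideal I) (I_proper : ~ I setT) (r0 : 0 <= r).
Hypothesis mX : forall n, U_rand_var dist (X n).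

Lemma rough_I_lim_ky_fan_le (Y Z : S -> U) :
  rough_I_lim P dist I r X Y -> rough_I_lim P dist I r X Z ->
  ky_fan P dist Y Z <= Num.min 1 (2 * r).
Proof.
move=> [mY limY] [mZ limZ]; rewrite le_min; apply/andP; split.
  by apply: ky_fan_le1; exact: measurable_dist_gt.
apply: ky_fan_le_double => // eps delta e0 d0.
have [n [nY nZ]] := proper_ideal_exists_notU I_ideal I_proper
  (limY _ _ e0 d0) (limZ _ _ e0 d0).
by exists (X n) => //; split; rewrite leNgt; apply/negP.
Qed.

Lemma ky_fan_diam_rough_I_lim_le :
  ky_fan_diam P dist (rough_I_lim P dist I r X) <= Num.min 1 (2 * r).
Proof.
apply: ky_fan_diam_le => [|Y Z]; last exact: rough_I_lim_ky_fan_le.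
by rewrite le_min ler01 /= mulr_ge0.
Qed.

End rough_limits.

Section real_line.
Context {R : realType}.

Lemma is_metric_normB : is_metric (fun x y : R => `|x - y|).
Proof.
move=> x y z; split; first exact: normr_ge0.
split; first split => [/eqP|->].
- by rewrite normr_eq0 subr_eq0 => /eqP.
- by rewrite subrr normr0.
by split; [exact: distrC | exact: ler_distD].
Qed.

Lemma separable_normB : separable (fun x y : R => `|x - y|).
Proof.
exists (range (@ratr R)); split.
  exact: (sub_countable (card_image_le _ _) (countableP _)).
move=> x e e0.
have [y [xy [q _ qy]]] :=
  @dense_rat R (ball x e) (ex_intro _ x (ballxx x e0)) (ball_open x e).
by exists y; split; [exists q | move: xy; rewrite -ball_normE].
Qed.

Lemma ky_fan_diam_rough_I_harm_lim_zero (r : R) : 0 < 2 * r -> 2 * r < 1 ->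
  ky_fan_diam (\d_tt : probability unit R) (fun x y : R => `|x - y|)
    (rough_I_lim (\d_tt : probability unit R) (fun x y : R => `|x - y|)
       (@I_harm R) r (fun _ _ => 0)) = 2 * r.
Proof.
move=> r_gt0 r_lt1; have r_ge0 : 0 <= r by lra.
set P := (\d_tt : probability unit R); set dist := fun x y : R => `|x - y|.
set L := rough_I_lim P dist I_harm r (fun _ _ => 0).
have L_bound : forall Y Z, L Y -> L Z -> ky_fan P dist Y Z <= Num.min 1 (2 * r).
  apply: rough_I_lim_ky_fan_le r_ge0 _.
  - exact: is_metric_normB.
  - exact: separable_normB.
  - exact: is_ideal_I_harm.
  - exact: not_I_harm_setT.
  - by move=> n; exact: U_rand_var_cst.
have L_cst (c : R) : `|c| = r -> L (fun _ => c).
  have [I0 _] := @is_ideal_I_harm R.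
  move=> cr; apply: rough_I_lim_of_dist_le => //.
  by move=> n s; rewrite /dist sub0r normrN cr.
apply/le_anti/andP; split.
  apply: (@le_trans _ _ (Num.min 1 (2 * r))); last by rewrite ge_min lexx orbT.
  by apply: ky_fan_diam_le _ _ _ L_bound; rewrite le_min ler01 mulr_ge0.
apply: le_trans (ky_fan_le_diam _ _ _ _ L_bound (L_cst r _) (L_cst (- r) _));
  last 2 first.
- exact: ger0_norm.
- by rewrite normrN ger0_norm.
apply: ky_fan_ge; first exact: ltW.
  by move=> _; rewrite /dist opprK ger0_norm; lra.
by apply: (measurable_dist_gt is_metric_normB separable_normB);
  exact: U_rand_var_cst.
Qed.

End real_line.

Theorem theorem2p1 (R : realType) :
  (forall (d : measure_display) (S : measurableType d) (P : probability S R)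
     (U : Type) (dist : U -> U -> R) (I : set (set nat)) (r : R)
     (X : nat -> S -> U),
     is_metric dist -> separable dist ->
     is_ideal I -> ~ I setT -> 0 <= r ->
     (forall n, U_rand_var dist (X n)) ->
     (exists M : R, forall Y Z, rough_I_lim P dist I r X Y ->
        rough_I_lim P dist I r X Z -> ky_fan P dist Y Z <= M) /\
     ky_fan_diam P dist (rough_I_lim P dist I r X) <= Num.min 1 (2 * r))
  /\
  (forall r : R, 0 < 2 * r -> 2 * r < 1 ->
     exists (d : measure_display) (S : measurableType d) (P : probability S R)
       (X : nat -> S -> R),
       (forall n, U_rand_var (fun x y : R => `|x - y|) (X n)) /\
       ky_fan_diam P (fun x y : R => `|x - y|)
         (rough_I_lim P (fun x y : R => `|x - y|) (@I_harm R) r X) = 2 * r).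
Proof.
split.
- move=> d S P U dist I r X dist_metric dist_separable I_ideal I_proper r0 mX.
  split; last exact: ky_fan_diam_rough_I_lim_le.
  exists 1 => Y Z LY LZ.
  apply: le_trans (rough_I_lim_ky_fan_le dist_metric dist_separable I_ideal
    I_proper r0 mX _ _ LY LZ) _.
  by rewrite ge_min lexx.
- move=> r r_gt0 r_lt1.
  exists _, unit, \d_tt, (fun _ _ => 0); split.
    by move=> n; exact: U_rand_var_cst.
  exact: ky_fan_diam_rough_I_harm_lim_zero.
Qed.
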